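(* Let $r\ge2$, $k\ge3$ and let $\widehat{F}_k$ be an $r$-coloring of $K_k$. If $G$ is an $(r,\widehat{F}_k)$-extremal graph, $S\subseteq V(G)$ is an independent set and $H=G-S$, then for every $u,v\in S$ we have $\vec{u}_H=\vec{v}_H$.
   Context: An $r$-coloring of a graph assigns colors from $\{1,\dots,r\}$ to edges (not necessarily properly). A copy of $\widehat{F}_k$ in a colored graph is a set of $k$ pairwise adjacent vertices admitting a bijection to $V(K_k)$ under which two edges have equal colors iff their images have equal colors in $\widehat{F}_k$; a coloring is $\widehat{F}_k$-free if it has no copy. $c_{r,\widehat{F}_k}(G)$ is the number of $\widehat{F}_k$-free $r$-colorings of $E(G)$, $c_{r,\widehat{F}_k}(n)$ its maximum over $n$-vertex graphs, and an $n$-vertex graph $G$ is $(r,\widehat{F}_k)$-extremal if $c_{r,\widehat{F}_k}(G)=c_{r,\widehat{F}_k}(n)$. For a subgraph $H$ of $G$, a vertex $v\in V(G)\setminus V(H)$ and an $\widehat{F}_k$-free coloring $\widehat{H}$ of $H$, $c(v,\widehat{H})$ denotes the number of ways to $r$-color the edges of $G$ from $v$ to $V(H)$ so that the resulting coloring of $G[V(H)\cup\{v\}]$ is $\widehat{F}_k$-free. $\vec{v}_H$ is the vector indexed by the $\widehat{F}_k$-free $r$-colorings $\widehat{H}$ of $H$ with $\vec{v}_H(\widehat{H})=c(v,\widehat{H})$. *)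

From mathcomp Require Import all_boot.
Set Implicit Arguments. Unset Strict Implicit. Unset Printing Implicit Defensive.

Section ColoredGraphs.
Variable V : finType.

Definition simple_graph (g : rel V) : Prop := symmetric g /\ irreflexive g.

Definition is_edge (g : rel V) (A : {set V}) : bool :=
  [exists x, exists y, [&& x != y, g x y & A == [set x; y]]].

Definition edge (g : rel V) := {A : {set V} | is_edge g A}.

Definition coloring (r : nat) (g : rel V) := {ffun edge g -> 'I_r}.

Definition ecol r (g : rel V) (c : coloring r g) (x y : V) : option 'I_r :=
  omap c (insub [set x; y] : option (edge g)).

(* Induced subgraph G[W], kept on the vertex type V (vertices outside W
   become isolated; its edge set is exactly E(G[W])). *)
Definition induced (g : rel V) (W : {set V}) : rel V :=
  fun x y => [&& x \in W, y \in W & g x y].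

End ColoredGraphs.

Definition Kgraph (k : nat) : rel 'I_k := fun i j => i != j.
Arguments Kgraph k : clear implicits.

Definition has_copy (V : finType) r k (phi : coloring r (Kgraph k))
  (g : rel V) (c : coloring r g) : bool :=
  [exists s : {ffun 'I_k -> V},
     [&& injectiveb s,
         [forall i, forall j, (i != j) ==> g (s i) (s j)] &
         [forall i, forall j, forall i', forall j',
            ((i != j) && (i' != j')) ==>
            ((ecol c (s i) (s j) == ecol c (s i') (s j'))
             == (ecol phi i j == ecol phi i' j'))]]].

Definition Ffree (V : finType) r k (phi : coloring r (Kgraph k))
  (g : rel V) (c : coloring r g) : bool := ~~ has_copy phi c.

Definition cnt (V : finType) r k (phi : coloring r (Kgraph k)) (g : rel V) : nat :=
  #|[set c : coloring r g | Ffree phi c]|.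

Definition extremal (V : finType) r k (phi : coloring r (Kgraph k)) (g : rel V) : Prop :=
  simple_graph g /\
  forall g' : rel V, simple_graph g' -> cnt phi g' <= cnt phi g.

(* c(v, Hhat): H = G[W], v \notin W, Hhat a coloring of H; number of
   F-free colorings of G[W ∪ {v}] extending Hhat (i.e. the colorings of
   the edges from v to W making the whole F-free). *)
Definition cext (V : finType) r k (phi : coloring r (Kgraph k)) (g : rel V)
  (W : {set V}) (v : V) (Hh : coloring r (induced g W)) : nat :=
  #|[set c : coloring r (induced g (v |: W)) |
      Ffree phi c &&
      [forall x, forall y,
         ((x \in W) && (y \in W)) ==> (ecol c x y == ecol Hh x y)]]|.

Arguments cext V r k phi g W v Hh : clear implicits.
Arguments cext {V r k} phi g W v Hh.

(* The vector \vec v_H, indexed by the F-free colorings of H = G[W]. *)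
Definition cvec (V : finType) r k (phi : coloring r (Kgraph k)) (g : rel V)
  (W : {set V}) (v : V) : coloring r (induced g W) -> option nat :=
  fun Hh => if Ffree phi Hh then Some (cext phi g W v Hh) else None.
Arguments cvec {V r k} phi g W v Hh.

From mathcomp Require Import all_boot fingroup perm zify.
From Stdlib Require Import FunctionalExtensionality.

(* Colour G by first colouring H = G - S and then, independently for each vertex w
   of the independent set S, the edges from w to H:
     c(G) = sum_Ĥ prod_(w in S) c(w, Ĥ).
   For s : S -> S let G_s be G with every w in S replaced by a twin of s w; then
   c(G_s) = sum_Ĥ prod_w c(s w, Ĥ) <= c(G) by extremality.  If s is optimal and
   p != q are in S, write a = c(s p, Ĥ), b = c(s q, Ĥ) and R for the product over
   the remaining vertices; redirecting q to s p, resp. p to s q, gives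
     sum (a^2 + b^2) R <= 2 c(G) = sum 2ab R,
   so both redirections are optimal and R (a - b)^2 = 0 termwise.  Collapsing
   S minus {u, v} onto u one vertex at a time keeps s optimal and makes
   R = c(u, Ĥ)^(|S|-2), whence c(u, Ĥ) = 0 or c(u, Ĥ) = c(v, Ĥ); by symmetry the two
   always agree. *)

Set Implicit Arguments. Unset Strict Implicit. Unset Printing Implicit Defensive.

Section Tables.
Variables (V : finType) (r : nat).

(* Colourings of different graphs on V have different types; to compare their
   numbers we encode a colouring by its symmetric table of pair colours, [None]
   off the edge set. *)
Definition table := {ffun V -> {ffun V -> option 'I_r}}.

Definition table_of (g : rel V) (c : coloring r g) : table :=
  [ffun x => [ffun y => ecol c x y]].

Definition table_on (g : rel V) (f : table) : bool :=
  [forall x, forall y, (f x y == f y x) && ((f x y != None) == is_edge g [set x; y])].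

Definition restrict (A : {set V}) (f : table) : table :=
  [ffun x => [ffun y => if (x \in A) && (y \in A) then f x y else None]].

Definition relabel (p : {perm V}) (f : table) : table :=
  [ffun x => [ffun y => f (p x) (p y)]].

Lemma eq_set2 (x y a b : V) : x != y -> [set x; y] = [set a; b] ->
  (a = x /\ b = y) \/ (a = y /\ b = x).
Proof.
move=> xy E.
have := set21 a b; have := set22 a b; rewrite -E !inE.
have := set21 x y; have := set22 x y; rewrite E !inE.
by do 4![case/orP=> /eqP ?]; subst; rewrite ?eqxx in xy *; auto.
Qed.

Lemma is_edge_set2 (g : rel V) x y :
  is_edge g [set x; y] = (x != y) && (g x y || g y x).
Proof.
apply/existsP/andP => [[a /existsP[b /and3P[ab gab /eqP E]]] | [xy /orP[gxy|gyx]]].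
- by have [[-> ->]|[-> ->]] := eq_set2 ab (esym E); rewrite ?gab ?orbT // eq_sym.
- by exists x; apply/existsP; exists y; rewrite xy gxy eqxx.
- by exists y; apply/existsP; exists x; rewrite eq_sym xy gyx setUC eqxx.
Qed.

Lemma ecolC (g : rel V) (c : coloring r g) x y : ecol c x y = ecol c y x.
Proof. by rewrite /ecol setUC. Qed.

Lemma ecol_neq_None (g : rel V) (c : coloring r g) x y :
  (ecol c x y != None) = is_edge g [set x; y].
Proof. by rewrite /ecol; case: insubP => [e -> _|/negbTE ->]. Qed.

Lemma table_onP (g : rel V) (f : table) :
  reflect (forall x y, f x y = f y x /\ (f x y != None) = is_edge g [set x; y])
          (table_on g f).
Proof.
apply: (iffP forallP) => [fg x y | fg x]; last first.
  by apply/forallP => y; have [-> ->] := fg x y; rewrite !eqxx.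
by have /forallP/(_ y)/andP[/eqP -> /eqP ->] := fg x.
Qed.

Lemma table_on_None (g : rel V) (f : table) x y :
  table_on g f -> ~~ is_edge g [set x; y] -> f x y = None.
Proof. by move=> /table_onP/(_ x y)[_ <-]; case: (f x y). Qed.

Lemma table_of_on (g : rel V) (c : coloring r g) : table_on g (table_of c).
Proof. by apply/table_onP => x y; rewrite !ffunE ecol_neq_None ecolC. Qed.

Lemma table_of_inj (g : rel V) : injective (@table_of g).
Proof.
move=> c1 c2 E; apply/ffunP => -[A A_edge].
have /existsP[x /existsP[y /and3P[_ _ /eqP defA]]] := A_edge; subst A.
have := congr1 (fun f : table => f x y) E; rewrite !ffunE /ecol.
by rewrite (insubT (is_edge g) A_edge) => -[].
Qed.

Lemma table_of_onto (d : 'I_r) (g : rel V) (f : table) :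
  table_on g f -> exists c : coloring r g, table_of c = f.
Proof.
move=> /table_onP fg.
pose c : coloring r g := [ffun e : edge g => odflt d
  [pick o | [exists x, exists y, (val e == [set x; y]) && (f x y == Some o)]]].
exists c; apply/ffunP => x; apply/ffunP => y; rewrite !ffunE /ecol.
case: insubP => [e xy_edge val_e|xy_edge] /=; last first.
  by have := (fg x y).2; rewrite (negbTE xy_edge); case: (f x y).
have xy : x != y by move: xy_edge; rewrite is_edge_set2 => /andP[].
rewrite ffunE; case: pickP => [o /existsP[a /existsP[b /andP[/eqP E /eqP fo]]]|none].
  rewrite val_e in E.
  by have [[? ?]|[? ?]] := eq_set2 xy E; subst; rewrite ?fo // (fg x y).1 fo.
have := (fg x y).2; rewrite xy_edge; case fxy: (f x y) => [o|] // _.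
have /existsP[] := negbFE (none o); exists x; apply/existsP; exists y.
by rewrite val_e fxy !eqxx.
Qed.

Lemma card_table_of (d : 'I_r) (g : rel V) (P : pred table) :
  #|[set c : coloring r g | P (table_of c)]| = #|[set f | table_on g f && P f]|.
Proof.
rewrite -(card_imset _ (@table_of_inj g)); apply: eq_card => f; rewrite inE.
apply/imsetP/andP => [[c] | [fg Pf]].
  by rewrite inE => Pc ->; rewrite table_of_on.
by have [c Ec] := table_of_onto d fg; exists c; rewrite // inE Ec.
Qed.

Lemma relabelK (p : {perm V}) : cancel (relabel p) (relabel p^-1).
Proof. by move=> f; apply/ffunP => x; apply/ffunP => y; rewrite !ffunE !permKV. Qed.

Lemma relabelVK (p : {perm V}) : cancel (relabel p^-1) (relabel p).
Proof. by move=> f; apply/ffunP => x; apply/ffunP => y; rewrite !ffunE !permK. Qed.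

End Tables.

Section Copies.
Variables (V : finType) (r k : nat) (phi : coloring r (Kgraph k)).

Definition tcopy (f : table V r) (s : {ffun 'I_k -> V}) : bool :=
  [&& injectiveb s,
      [forall i, forall j, (i != j) ==> (f (s i) (s j) != None)] &
      [forall i, forall j, forall i', forall j', ((i != j) && (i' != j')) ==>
         ((f (s i) (s j) == f (s i') (s j')) == (ecol phi i j == ecol phi i' j'))]].

Definition tfree (f : table V r) : bool := ~~ [exists s, tcopy f s].

Lemma eq_tcopy (f1 f2 : table V r) (s : {ffun 'I_k -> V}) :
  (forall i j, i != j -> f1 (s i) (s j) = f2 (s i) (s j)) -> tcopy f1 s = tcopy f2 s.
Proof.
move=> f12; congr [&& _, _ & _].
  by apply: eq_forallb => i; apply: eq_forallb => j; case: eqVneq => // /f12 ->.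
do 4![apply: eq_forallb => ?]; case: eqVneq => //= ij; case: eqVneq => //= ij'.
by rewrite f12 // [f1 _ _]f12.
Qed.

Lemma Ffree_tfree (g : rel V) (c : coloring r g) :
  symmetric g -> Ffree phi c = tfree (table_of c).
Proof.
move=> gs; congr (~~ _); apply: eq_existsb => s.
rewrite /tcopy; case s_inj: (injectiveb s) => //=; congr (_ && _).
- apply: eq_forallb => i; apply: eq_forallb => j; case: eqVneq => //= ij.
  have sij : s i != s j by apply: contra ij => /eqP/(injectiveP _ s_inj) ->.
  by rewrite !ffunE ecol_neq_None is_edge_set2 sij gs orbb.
- by do 4![apply: eq_forallb => ?]; rewrite !ffunE.
Qed.

Lemma tfree_restrict (A : {set V}) (f : table V r) : tfree f -> tfree (restrict A f).
Proof.
apply: contra => /existsP[s s_copy]; apply/existsP; exists s.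
rewrite -(@eq_tcopy (restrict A f)) // => i j ij; rewrite !ffunE.
have /and3P[_ /forallP/(_ i)/forallP/(_ j)] := s_copy.
by rewrite ij !ffunE; case: ifP.
Qed.

Lemma tcopy_relabel (p : {perm V}) (f : table V r) (s : {ffun 'I_k -> V}) :
  tcopy (relabel p f) s -> tcopy f [ffun i => p (s i)].
Proof.
case/and3P => s_inj s_edge s_col; apply/and3P; split.
- by apply/injectiveP => i j; rewrite !ffunE => /perm_inj/(injectiveP _ s_inj).
- by apply/forallP => i; apply/forallP => j; move/forallP/(_ i)/forallP/(_ j): s_edge;
    rewrite !ffunE.
- apply/forallP => i; apply/forallP => j; apply/forallP => i'; apply/forallP => j'.
  by move/forallP/(_ i)/forallP/(_ j)/forallP/(_ i')/forallP/(_ j'): s_col; rewrite !ffunE.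
Qed.

Lemma tfree_relabel (p : {perm V}) (f : table V r) : tfree (relabel p f) = tfree f.
Proof.
congr (~~ _); apply/existsP/existsP => -[s].
  by move/tcopy_relabel=> s_copy; exists [ffun i => p (s i)].
by rewrite -{1}[f](relabelK p) => /tcopy_relabel s_copy; exists [ffun i => p^-1%g (s i)].
Qed.

End Copies.

Section TableSets.
Variables (V : finType) (r k : nat) (phi : coloring r (Kgraph k)).

Definition free_tables (G : rel V) : {set table V r} :=
  [set f | table_on G f && tfree phi f].

Definition ext_tables (G : rel V) (W : {set V}) (v : V) (h : table V r) :
    {set table V r} :=
  [set f | [&& table_on (induced G (v |: W)) f, tfree phi f &
              [forall x, forall y, (x \in W) && (y \in W) ==> (f x y == h x y)]]].

Lemma induced_sym (G : rel V) A : symmetric G -> symmetric (induced G A).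
Proof. by move=> Gs x y; rewrite /induced Gs andbCA. Qed.

Lemma is_edge_induced (G : rel V) A x y :
  is_edge (induced G A) [set x; y] = [&& x \in A, y \in A & is_edge G [set x; y]].
Proof.
rewrite !is_edge_set2 /induced.
by case: (x \in A); case: (y \in A); rewrite ?andbF.
Qed.

Lemma eq_table_on (G1 G2 : rel V) : G1 =2 G2 -> @table_on V r G1 =1 table_on G2.
Proof.
move=> G12 f; rewrite /table_on.
by do 2![apply: eq_forallb => ?]; rewrite !is_edge_set2 !G12.
Qed.

Lemma eq_free_tables (G1 G2 : rel V) : G1 =2 G2 -> free_tables G1 = free_tables G2.
Proof. by move=> G12; apply/setP => f; rewrite !inE (eq_table_on G12). Qed.

Lemma cnt_free_tables (d : 'I_r) (G : rel V) :
  symmetric G -> cnt phi G = #|free_tables G|.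
Proof.
move=> Gs; rewrite /cnt -card_table_of //; apply: eq_card => c.
by rewrite !inE Ffree_tfree.
Qed.

Lemma cext_ext_tables (d : 'I_r) (g : rel V) W v (Hh : coloring r (induced g W)) :
  symmetric g -> cext phi g W v Hh = #|ext_tables g W v (table_of Hh)|.
Proof.
move=> gs; rewrite /cext.
pose P f := tfree phi f &&
  [forall x, forall y, (x \in W) && (y \in W) ==> (f x y == table_of Hh x y)].
transitivity #|[set c : coloring r (induced g (v |: W)) | P (table_of c)]|.
  apply: eq_card => c; rewrite !inE /P Ffree_tfree; last exact: induced_sym.
  by congr (_ && _); do 2![apply: eq_forallb => ?]; rewrite !ffunE.
by rewrite card_table_of //; apply: eq_card => f; rewrite !inE.
Qed.

Lemma table_of_free_tables (G : rel V) (c : coloring r G) :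
  symmetric G -> Ffree phi c -> table_of c \in free_tables G.
Proof. by move=> Gs c_free; rewrite inE table_of_on -Ffree_tfree. Qed.

Lemma table_on_relabel (p : {perm V}) (G1 G2 : rel V) (f : table V r) :
  (forall x y, G2 (p x) (p y) = G1 x y) -> table_on G1 (relabel p f) = table_on G2 f.
Proof.
move=> G12.
have edge_p x y : is_edge G2 [set p x; p y] = is_edge G1 [set x; y].
  by rewrite !is_edge_set2 (inj_eq perm_inj) !G12.
apply/table_onP/table_onP => f_on x y; last by rewrite !ffunE -edge_p; apply: f_on.
by have := f_on (p^-1 x)%g (p^-1 y)%g; rewrite !ffunE -edge_p !permKV.
Qed.

Lemma card_ext_tables_relabel (p : {perm V}) (G1 G2 : rel V) (W : {set V}) v1 v2 h :
  {in W, p =1 id} ->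
  (forall x y, induced G2 (v2 |: W) (p x) (p y) = induced G1 (v1 |: W) x y) ->
  #|ext_tables G1 W v1 h| = #|ext_tables G2 W v2 h|.
Proof.
move=> p_W G12.
have relabel_ext f : (relabel p f \in ext_tables G1 W v1 h) = (f \in ext_tables G2 W v2 h).
  rewrite !inE (table_on_relabel _ G12) tfree_relabel; congr [&& _, _ & _].
  do 2![apply: eq_forallb => ?]; apply: implyb_id2l => /andP[xW yW].
  by rewrite !ffunE !p_W.
rewrite -[RHS](card_imset _ (can_inj (relabelK p))); apply: eq_card => f.
apply/idP/imsetP => [f_ext | [f' f'_ext ->]]; last by rewrite relabel_ext.
by exists (relabel p^-1 f); rewrite ?relabelVK // -relabel_ext relabelVK.
Qed.

End TableSets.

Section Decomposition.
Variables (V : finType) (r k : nat) (phi : coloring r (Kgraph k)).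

Lemma table_on_restrict (G : rel V) (A : {set V}) (f : table V r) :
  table_on G f -> table_on (induced G A) (restrict A f).
Proof.
move=> /table_onP f_on; apply/table_onP => x y; rewrite !ffunE is_edge_induced.
by have [fC f_edge] := f_on x y; case: (x \in A); case: (y \in A); rewrite //= f_edge fC.
Qed.

Lemma restrict_free_tables (G : rel V) (A : {set V}) (f : table V r) :
  f \in free_tables phi G -> restrict A f \in free_tables phi (induced G A).
Proof.
by rewrite !inE => /andP[f_on f_free]; rewrite table_on_restrict ?tfree_restrict.
Qed.

Lemma tcopy_restrict (A : {set V}) (f : table V r) (s : {ffun 'I_k -> V}) :
  (forall i, s i \in A) -> tcopy phi (restrict A f) s = tcopy phi f s.
Proof. by move=> sA; apply: eq_tcopy => i j _; rewrite !ffunE !sA. Qed.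

Lemma tcopy_edge (f : table V r) (s : {ffun 'I_k -> V}) i j :
  tcopy phi f s -> i != j -> f (s i) (s j) != None.
Proof. by case/and3P=> _ /forallP/(_ i)/forallP/(_ j)/implyP. Qed.

Variables (G : rel V) (S : {set V}).
Hypothesis S_indep : {in S &, forall x y, ~~ G x y}.
Local Notation W := (~: S).

Section Fiber.
Variable h : table V r.
Hypothesis h_free : h \in free_tables phi (induced G W).

Definition fiber := [set f in free_tables phi G | restrict W f == h].

Definition links (f : table V r) : {ffun V -> table V r} :=
  [ffun w => if w \in S then restrict (w |: W) f else h].

Definition glue (t : {ffun V -> table V r}) : table V r :=
  [ffun x => [ffun y => if x \in S then (if y \in S then None else t x x y)
                        else if y \in S then t y x y else h x y]].

Definition link_family (w : V) : {pred table V r} :=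
  if w \in S then mem (ext_tables phi G W w h) else mem (pred1 h).

Lemma glue_links f : f \in fiber -> glue (links f) = f.
Proof.
rewrite !inE => /andP[/andP[f_on _] /eqP f_h].
apply/ffunP => x; apply/ffunP => y; rewrite !ffunE -f_h.
case xS: (x \in S); case yS: (y \in S);
  rewrite ?ffunE ?in_setU1 ?in_setC ?eqxx ?xS ?yS ?orbT //.
by rewrite (table_on_None f_on) // is_edge_set2 !(negbTE (S_indep _ _)) ?andbF.
Qed.

Lemma links_glue t : t \in family link_family -> links (glue t) = t.
Proof.
move/familyP => t_fam; apply/ffunP => w; rewrite ffunE.
have := t_fam w; rewrite /link_family; case: ifP => wS; last by move/eqP.
rewrite inE => /and3P[t_on _ /forallP t_h].
apply/ffunP => x; apply/ffunP => y; rewrite !ffunE.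
have [xA|xA] := boolP (x \in w |: W); last first.
  by rewrite (table_on_None t_on) // is_edge_induced (negbTE xA).
have [yA|yA] := boolP (y \in w |: W); last first.
  by rewrite (table_on_None t_on) // is_edge_induced (negbTE yA) andbF.
move: xA yA; rewrite !in_setU1 !in_setC.
case/orP => [/eqP ->|/negbTE xS]; case/orP => [/eqP ->|/negbTE yS]; rewrite ?wS ?xS ?yS //.
- by rewrite (table_on_None t_on) // is_edge_set2 eqxx.
- by have /forallP/(_ y) := t_h x; rewrite !in_setC xS yS => /eqP.
Qed.

Lemma links_family f : f \in fiber -> links f \in family link_family.
Proof.
rewrite inE => /andP[f_free /eqP f_h]; apply/familyP => w.
rewrite /link_family ffunE; case: ifP => wS; last by rewrite inE.
have := restrict_free_tables (w |: W) f_free; rewrite !inE => /andP[-> ->] /=.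
apply/forallP => x; apply/forallP => y; apply/implyP => /andP[xW yW].
by rewrite -f_h !ffunE !in_setU1 xW yW !orbT.
Qed.

Lemma restrict_glue t : restrict W (glue t) = h.
Proof.
have := h_free; rewrite inE => /andP[h_on _].
apply/ffunP => x; apply/ffunP => y; rewrite !ffunE !in_setC.
case xS: (x \in S); case yS: (y \in S) => //=; symmetry; apply: (table_on_None h_on);
  by rewrite is_edge_induced !in_setC xS yS.
Qed.

Lemma glue_on t : t \in family link_family -> table_on G (glue t).
Proof.
move/familyP => t_fam.
have t_on w : w \in S -> table_on (induced G (w |: W)) (t w).
  by move=> wS; have := t_fam w; rewrite /link_family wS inE => /andP[].
have := h_free; rewrite inE => /andP[h_on _].
apply/table_onP => x y; rewrite !ffunE.
case xS: (x \in S); case yS: (y \in S) => /=.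
- by rewrite is_edge_set2 !(negbTE (S_indep _ _)) ?andbF.
- have /table_onP/(_ x y)[-> ->] := t_on x xS.
  by rewrite is_edge_induced !in_setU1 !in_setC eqxx yS orbT.
- have /table_onP/(_ x y)[-> ->] := t_on y yS.
  by rewrite is_edge_induced !in_setU1 !in_setC eqxx xS orbT.
- have /table_onP/(_ x y)[-> ->] := h_on.
  by rewrite is_edge_induced !in_setC xS yS.
Qed.

Lemma glue_free t : t \in family link_family -> tfree phi (glue t).
Proof.
move=> t_fam; apply/existsP => -[s s_copy].
case: (pickP (fun i => s i \in S)) => [i0 /= | s_W].
- set w := s i0 => wS.
  have s_link j : s j \in w |: W.
    rewrite in_setU1 in_setC; case: (eqVneq j i0) => [-> | ji0]; first by rewrite eqxx.
    apply/orP; right; apply: contraTN (tcopy_edge s_copy ji0) => sjS.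
    by rewrite !ffunE sjS wS.
  move/familyP/(_ w): (t_fam); rewrite /link_family wS inE => /and3P[_ /existsP[]].
  by exists s; rewrite -(links_glue t_fam) ffunE wS tcopy_restrict.
- have := h_free; rewrite inE => /andP[_ /existsP[]]; exists s.
  by rewrite -(restrict_glue t) tcopy_restrict // => i; rewrite in_setC s_W.
Qed.

Lemma glue_fiber t : t \in family link_family -> glue t \in fiber.
Proof. by move=> t_fam; rewrite !inE glue_on ?glue_free ?restrict_glue ?eqxx. Qed.

Lemma card_fiber : #|fiber| = \prod_(w in S) #|ext_tables phi G W w h|.
Proof.
rewrite -(card_in_imset (f := links)); last first.
  by move=> f1 f2 /glue_links f1E /glue_links f2E E; rewrite -f1E -f2E E.
have -> : #|links @: fiber| = #|family link_family|.
  apply: eq_card => t; apply/imsetP/idP => [[f /links_family f_fam ->] // | t_fam].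
  by exists (glue t); rewrite ?glue_fiber ?links_glue.
rewrite card_family foldrE big_map big_enum [RHS]big_mkcond /=.
by apply: eq_bigr => w _; rewrite /link_family; case: (w \in S); rewrite ?card1.
Qed.

End Fiber.

Lemma card_free_tables_split :
  #|free_tables phi G| =
  \sum_(h in free_tables phi (induced G W)) \prod_(w in S) #|ext_tables phi G W w h|.
Proof.
rewrite -sum1_card (partition_big (restrict W) (mem (free_tables phi (induced G W)))) /=;
  last by move=> f; apply: restrict_free_tables.
apply: eq_bigr => h h_free; rewrite -card_fiber // -sum1_card.
by apply: eq_bigl => f; rewrite !inE.
Qed.

End Decomposition.

Lemma nat_Cauchy_mulr a b c :
  2 * (a * b * c) <= a * a * c + b * b * c ?= iff (c == 0) || (a == b).
Proof.
case: (posnP c) => [-> | c_gt0]; first by rewrite !muln0; apply: leqif_refl.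
have [le_ab eq_ab] := nat_Cauchy a b.
rewrite /= -mulnDl !mulnn mulnA.
by split; [rewrite leq_mul2r le_ab orbT | rewrite eqn_pmul2r].
Qed.

Section CloneSum.
Variables (V T : finType) (P : {pred T}) (X : V -> T -> nat) (S : {set V}).

Definition clone_sum (s : V -> V) : nat := \sum_(h in P) \prod_(w in S) X (s w) h.

Hypothesis clone_sum_max : forall s, {homo s : w / w \in S} -> clone_sum s <= clone_sum id.

Lemma eq_clone_sum s1 s2 : {in S, s1 =1 s2} -> clone_sum s1 = clone_sum s2.
Proof. by move=> s12; apply: eq_bigr => h _; apply: eq_big => // w /s12 ->. Qed.

Definition redirect (s : V -> V) (q y : V) : V -> V :=
  fun w => if w == q then y else s w.

Lemma redirect_homo s q y :
  {homo s : w / w \in S} -> y \in S -> {homo redirect s q y : w / w \in S}.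
Proof. by move=> sS yS w wS; rewrite /redirect; case: ifP => // _; apply: sS. Qed.

Section Pair.
Variables (s : V -> V) (p q : V).
Hypotheses (sS : {homo s : w / w \in S}) (s_opt : clone_sum s = clone_sum id).
Hypotheses (pS : p \in S) (qS : q \in S) (pq : p != q).

Let rest h := \prod_(w in S | (w != p) && (w != q)) X (s w) h.

Lemma prod_pair t h : {in S, forall w, w != p -> w != q -> t w = s w} ->
  \prod_(w in S) X (t w) h = X (t p) h * X (t q) h * rest h.
Proof.
move=> ts; rewrite (bigD1 p) //= (bigD1 q) /=; last by rewrite qS eq_sym.
rewrite mulnA; congr (_ * _); apply: eq_big => [w | w /andP[/andP[wS wp] wq]].
  by rewrite andbA.
by rewrite ts.
Qed.

Lemma clone_sum_redirect :
  clone_sum (redirect s q (s p)) = clone_sum id /\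
  {in P, forall h, rest h = 0 \/ X (s p) h = X (s q) h}.
Proof.
pose sp := redirect s q (s p); pose sq := redirect s p (s q).
have spS : {homo sp : w / w \in S} by apply: redirect_homo; apply: sS.
have sqS : {homo sq : w / w \in S} by apply: redirect_homo; apply: sS.
have s_pair : clone_sum s = \sum_(h in P) X (s p) h * X (s q) h * rest h.
  by apply: eq_bigr => h _; apply: prod_pair.
have sp_pair : clone_sum sp = \sum_(h in P) X (s p) h * X (s p) h * rest h.
  apply: eq_bigr => h _; rewrite (@prod_pair sp) /sp /redirect ?eqxx ?if_same //.
  by move=> w _ _ /negbTE ->.
have sq_pair : clone_sum sq = \sum_(h in P) X (s q) h * X (s q) h * rest h.
  apply: eq_bigr => h _; rewrite (@prod_pair sq) /sq /redirect ?eqxx ?if_same //.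
  by move=> w _ /negbTE ->.
have := leqif_sum (fun h (_ : h \in P) => nat_Cauchy_mulr (X (s p) h) (X (s q) h) (rest h)).
rewrite -big_distrr -s_pair big_split -sp_pair -sq_pair /= => -[le_s].
have sp_max := clone_sum_max spS; have sq_max := clone_sum_max sqS.
have -> : 2 * clone_sum s = clone_sum sp + clone_sum sq by lia.
rewrite eqxx => /esym/forall_inP eq_h; split; first by rewrite -/sp; lia.
by move=> h /eq_h /orP[/eqP | /eqP]; [left | right].
Qed.

End Pair.

Definition collapse (u : V) (L : seq V) : V -> V := fun w => if w \in L then u else w.

Lemma collapse_homo u L : u \in S -> {homo collapse u L : w / w \in S}.
Proof. by move=> uS w wS; rewrite /collapse; case: ifP. Qed.

Lemma clone_sum_collapse u L :
  u \in S -> u \notin L -> all (mem S) L -> clone_sum (collapse u L) = clone_sum id.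
Proof.
move=> uS; elim: L => [|t L IH] /=.
  by move=> _ _; apply: eq_clone_sum => w _; rewrite /collapse in_nil.
rewrite in_cons negb_or => /andP[ut uL] /andP[tS LS].
have [<- _] := clone_sum_redirect (collapse_homo L uS) (IH uL LS) uS tS ut.
apply: eq_clone_sum => w _; rewrite /redirect /collapse in_cons (negbTE uL).
by case: eqVneq.
Qed.

Lemma clone_sum_zero_or_eq u v h :
  u \in S -> v \in S -> h \in P -> X u h = 0 \/ X u h = X v h.
Proof.
move=> uS vS hP; case: (eqVneq u v) => [-> | uv]; first by right.
pose L := [seq w <- enum S | w \notin [:: u; v]].
have uL : u \notin L by rewrite mem_filter !inE eqxx.
have vL : v \notin L by rewrite mem_filter !inE eqxx orbT.
have LS : all (mem S) L by apply/allP => w; rewrite mem_filter mem_enum => /andP[].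
have [_ /(_ h hP)] := clone_sum_redirect (collapse_homo L uS) (clone_sum_collapse uS uL LS)
  uS vS uv.
rewrite /collapse (negbTE uL) (negbTE vL).
case: (posnP (X u h)) => [-> | Xu_gt0 [rest0 | ]]; [by left | | by right].
exfalso; move: rest0; apply/eqP; rewrite -lt0n.
apply: prodn_cond_gt0 => w /andP[wS /andP[wu wv]].
by rewrite mem_filter !inE negb_or wu wv mem_enum wS.
Qed.

Lemma clone_sum_max_eq u v : u \in S -> v \in S -> {in P, X u =1 X v}.
Proof.
move=> uS vS h hP.
have [Xu0 | //] := clone_sum_zero_or_eq uS vS hP.
by have [Xv0 | ->] := clone_sum_zero_or_eq vS uS hP; rewrite ?Xu0 ?Xv0.
Qed.

End CloneSum.

Section Relabelling.
Variables (V : finType) (r k : nat) (phi : coloring r (Kgraph k)).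

Lemma tperm_notin (W : {set V}) v1 v2 :
  v1 \notin W -> v2 \notin W -> {in W, tperm v1 v2 =1 id}.
Proof.
by move=> v1W v2W z zW; apply: tpermD; [exact: memPnC v1W z zW | exact: memPnC v2W z zW].
Qed.

Lemma induced_tperm (G1 G2 : rel V) (W : {set V}) v1 v2 :
  simple_graph G1 -> simple_graph G2 -> v1 \notin W -> v2 \notin W ->
  {in W &, forall x y, G2 x y = G1 x y} -> {in W, forall y, G2 v2 y = G1 v1 y} ->
  forall x y, induced G2 (v2 |: W) (tperm v1 v2 x) (tperm v1 v2 y) =
              induced G1 (v1 |: W) x y.
Proof.
move=> [G1_sym G1_irr] [G2_sym G2_irr] v1W v2W G_W G_link x y.
have tperm_W := tperm_notin v1W v2W.
have mem_tperm z : (tperm v1 v2 z \in v2 |: W) = (z \in v1 |: W).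
  rewrite !in_setU1; case: tpermP => [-> | -> | /eqP zv1 /eqP zv2]; rewrite ?eqxx //.
    by rewrite eq_sym (negbTE v1W) (negbTE v2W).
  by rewrite (negbTE zv1) (negbTE zv2).
rewrite /induced !mem_tperm.
case: (boolP (x \in v1 |: W)) => //= /setU1P[-> | xW];
  case: (boolP (y \in v1 |: W)) => //= /setU1P[-> | yW].
- by rewrite tpermL G1_irr G2_irr.
- by rewrite tpermL tperm_W // G_link.
- by rewrite tpermL tperm_W // G1_sym G2_sym G_link.
- by rewrite !tperm_W // G_W.
Qed.

Lemma card_ext_tables_tperm (G1 G2 : rel V) (W : {set V}) v1 v2 h :
  simple_graph G1 -> simple_graph G2 -> v1 \notin W -> v2 \notin W ->
  {in W &, forall x y, G2 x y = G1 x y} -> {in W, forall y, G2 v2 y = G1 v1 y} ->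
  #|ext_tables phi G1 W v1 h| = #|ext_tables phi G2 W v2 h|.
Proof.
move=> G1_simple G2_simple v1W v2W G_W G_link.
apply: (@card_ext_tables_relabel _ _ _ phi (tperm v1 v2)); first exact: tperm_notin.
exact: induced_tperm.
Qed.

End Relabelling.

Section Cloning.
Variables (V : finType) (r k : nat) (phi : coloring r (Kgraph k)) (d : 'I_r).
Variables (g : rel V) (S : {set V}).
Hypothesis g_simple : simple_graph g.
Hypothesis S_indep : {in S &, forall x y, ~~ g x y}.
Local Notation W := (~: S).

(* The graph G_s: each w in S takes the neighbourhood of s w in H = G - S. *)
Definition clone (s : V -> V) : rel V := fun x y =>
  if x \in S then (y \notin S) && g (s x) y
  else if y \in S then g (s y) x else g x y.

Lemma clone_simple s : simple_graph (clone s).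
Proof.
have [g_sym g_irr] := g_simple.
split=> [x y | x]; rewrite /clone.
  by case: (x \in S); case: (y \in S); rewrite //= g_sym.
by case: (x \in S) => //=; apply: g_irr.
Qed.

Lemma clone_indep s : {in S &, forall x y, ~~ clone s x y}.
Proof. by move=> x y xS yS; rewrite /clone xS yS. Qed.

Lemma induced_clone s : induced (clone s) W =2 induced g W.
Proof.
by move=> x y; rewrite /induced /clone !in_setC; case: (x \in S); case: (y \in S).
Qed.

Local Notation P := (free_tables phi (induced g W)).
Local Notation X := (fun w h => #|ext_tables phi g W w h|).

Lemma cnt_clone s : {homo s : w / w \in S} ->
  cnt phi (clone s) = clone_sum P X S s.
Proof.
move=> sS; rewrite (cnt_free_tables phi d (clone_simple s).1).
rewrite (card_free_tables_split phi (clone_indep s)) (eq_free_tables phi (induced_clone s)).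
apply: eq_bigr => h _; apply: eq_bigr => w wS.
apply: card_ext_tables_tperm; rewrite ?in_setC ?negbK ?sS //.
- exact: clone_simple.
- by move=> x y; rewrite !in_setC /clone => /negbTE -> /negbTE ->.
- by move=> y; rewrite in_setC /clone wS => /negbTE ->.
Qed.

Lemma cnt_clone_sum_id : cnt phi g = clone_sum P X S id.
Proof.
by rewrite (cnt_free_tables phi d g_simple.1) (card_free_tables_split phi S_indep).
Qed.

Lemma extremal_clone_sum_max :
  (forall g' : rel V, simple_graph g' -> cnt phi g' <= cnt phi g) ->
  forall s, {homo s : w / w \in S} -> clone_sum P X S s <= clone_sum P X S id.
Proof.
by move=> g_max s sS; rewrite -cnt_clone // -cnt_clone_sum_id; apply/g_max/clone_simple.
Qed.

End Cloning.

Theorem corollary2p8 (r k : nat) (phi : coloring r (Kgraph k))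
  (V : finType) (g : rel V) (S : {set V}) (u v : V) :
  2 <= r -> 3 <= k ->
  extremal phi g ->
  (forall x y, x \in S -> y \in S -> ~~ g x y) ->
  u \in S -> v \in S ->
  cvec phi g (~: S) u = cvec phi g (~: S) v.
Proof.
(* [2 <= r] only provides a default colour. *)
move=> r_ge2 _ [g_simple g_max] S_indep uS vS.
have d : 'I_r := Ordinal (ltnW r_ge2).
have X_uv := clone_sum_max_eq (extremal_clone_sum_max d g_simple S_indep g_max) uS vS.
apply: functional_extensionality => Hh; rewrite /cvec; case: ifP => // Hh_free.
have g_sym := g_simple.1.
rewrite !(cext_ext_tables phi d _ _ g_sym); congr Some.
by apply/X_uv/table_of_free_tables; first exact: induced_sym.
Qed.
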